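(* Let $V:\mathbb{R}^{d_1}\times\mathbb{R}^{d_2}\to\mathbb{R}^n$ be residual-homogeneous, $V(\theta_1,\theta_2)=\Phi\theta_1+g(\theta_2)$, where $\Phi\in\mathbb{R}^{n\times d_1}$ has full rank and $g$ is continuously differentiable and $h$-homogeneous, and suppose there are constants $C,\ell>0$ with $\Vert V(\theta)\Vert_\mu\le C\Vert\theta\Vert^\ell$ for all $\theta$. Let $\Pi_\Phi$ be the projection onto the column span of $\Phi$. Then for any initial condition, if $\theta(t)$ follows $\dot\theta=-\nabla V(\theta)^T A\,(V(\theta)-V^* )$, we have $$\liminf_{t\to\infty}\Vert V(\theta(t))-V^*\Vert_\mu\le\Big(1+\frac{1+\gamma}{1-\gamma}\Big)\Vert V^*-\Pi_\Phi V^*\Vert_\mu.$$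
   Context: A Markov reward process has finite state space with $n$ states, transition matrix $P$ defining an irreducible, aperiodic Markov chain with stationary distribution $\mu$, a finite reward function $r(s,s')$, and discount factor $\gamma\in[0,1)$. Let $R(s)=\mathbb{E}_{s'\sim P(\cdot|s)}[r(s,s')]$ and let $V^*\in\mathbb{R}^n$ be the unique solution of $V^*=R+\gamma PV^*$. Let $D_\mu=\mathrm{diag}(\mu)$ and $A:=D_\mu(I-\gamma P)$. For $x\in\mathbb{R}^n$, $\Vert x\Vert_\mu^2=x^TD_\mu x$; $\Vert\theta\Vert$ is the Euclidean norm. $\nabla V(\theta)$ is the Jacobian of $V$ with respect to $\theta=(\theta_1,\theta_2)$. A differentiable $f:\mathbb{R}^k\to\mathbb{R}^m$ is $h$-homogeneous (for $h\in\mathbb{R}$) if $f(x)=h\,\nabla f(x)\,x$ for all $x$. The projection $\Pi_\Phi$ is taken orthogonal with respect to $\langle x,y\rangle_\mu=x^TD_\mu y$. *)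

(* R : realType; vectors are ROW vectors 'rV[R]_k *)
From HB Require Import structures.
From mathcomp Require Import all_boot all_order all_algebra.
From mathcomp Require Import all_classical all_reals all_analysis.
Set Implicit Arguments. Unset Strict Implicit. Unset Printing Implicit Defensive.
Import Order.TTheory GRing.Theory Num.Theory.
Import numFieldNormedType.Exports.
Local Open Scope ring_scope.

Section Defs.
Variable R : realType.

Definition stochastic n (P : 'M[R]_n) :=
  (forall i j, 0 <= P i j) /\ (forall i, \sum_j P i j = 1).

Definition irreducible n (P : 'M[R]_n) :=
  forall i j, exists k : nat, 0 < (P ^+ k) i j.

(* aperiodic: for every state i, the gcd of the return times
   {k >= 1 | P^k(i,i) > 0} is 1, i.e. no d > 1 divides all of them *)
Definition aperiodic n (P : 'M[R]_n) :=
  forall i, forall d : nat, (1 < d)%N ->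
    ~ (forall k : nat, (0 < k)%N -> 0 < (P ^+ k) i i -> (d %| k)%N).

Definition stationary_dist n (P : 'M[R]_n) (mu : 'rV[R]_n) :=
  (forall i, 0 <= mu 0 i) /\ \sum_i mu 0 i = 1 /\ mu *m P = mu.

Definition Dmu n (mu : 'rV[R]_n) : 'M[R]_n := diag_mx mu.

Definition Amat n (mu : 'rV[R]_n) (gamma : R) (P : 'M[R]_n) : 'M[R]_n :=
  Dmu mu *m (1%:M - gamma *: P).

Definition mu_norm n (mu : 'rV[R]_n) (x : 'rV[R]_n) : R :=
  Num.sqrt ((x *m Dmu mu *m x^T) 0 0).

Definition eucl_norm k (x : 'rV[R]_k) : R := Num.sqrt (\sum_i x 0 i ^+ 2).

Definition exp_reward n (P : 'M[R]_n) (r : 'I_n -> 'I_n -> R) (s : 'I_n) : R :=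
  \sum_s' P s s' * r s s'.

(* p = Pi_Phi v : the mu-orthogonal projection of v onto the column span of Phi
   (Phi : n x d1, vectors written as rows, so Phi theta1 is theta1 *m Phi^T) *)
Definition is_mu_proj n d1 (mu : 'rV[R]_n) (Phi : 'M[R]_(n, d1)) (v p : 'rV[R]_n) :=
  (exists w : 'rV[R]_d1, p = w *m Phi^T) /\ (v - p) *m Dmu mu *m Phi = 0.

(* residual-homogeneous parametrization V(theta1, theta2) = Phi theta1 + g theta2,
   with theta = row_mx theta1 theta2 *)
Definition resV n d1 d2 (Phi : 'M[R]_(n, d1)) (g : 'rV[R]_d2 -> 'rV[R]_n)
  (theta : 'rV[R]_(d1 + d2)) : 'rV[R]_n :=
  lsubmx theta *m Phi^T + g (rsubmx theta).

(* f is h-homogeneous: f x = h * grad f(x) x. With row vectors, grad f(x) x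
   is x *m 'J f x ('J is the transposed Jacobian of derive.v) *)
Definition homogeneous k m (h : R) (f : 'rV[R]_k -> 'rV[R]_m) :=
  forall x, f x = h *: (x *m 'J f x).

End Defs.

(* Write Phi w = Pi_Phi Vstar and K = (1 + gamma) / (1 - gamma).  Along the flow, the
   Lyapunov function L = |theta_1 - w|^2 + h |theta_2|^2 has derivative
   -2 <V theta - Phi w, A (V theta - Vstar)>: by h-homogeneity of g, the gradient of L
   pushed through the Jacobian of V is exactly V theta - Phi w.  As P is a
   contraction for |.|_mu, A is coercive with constant 1 - gamma, and Young's
   inequality then gives
     L' <= -(1 - gamma) (|V theta - Vstar|_mu^2 - K^2 |Vstar - Phi w|_mu^2).
   If |V theta - Vstar|_mu stayed above K |Vstar - Phi w|_mu, L would decrease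
   linearly and become negative; hence the liminf is at most K |Vstar - Phi w|_mu,
   which is stronger than the claim.  A negative degree h forces g = 0, so h >= 0
   may be assumed. *)

From HB Require Import structures.
From mathcomp Require Import all_boot all_order all_algebra.
From mathcomp Require Import all_classical all_reals all_analysis.
From mathcomp Require Import ring lra.
Set Implicit Arguments.
Unset Strict Implicit.
Unset Printing Implicit Defensive.
Import Order.TTheory GRing.Theory Num.Theory.
Import numFieldNormedType.Exports.
Local Open Scope classical_set_scope.
Local Open Scope ring_scope.

Section mu_geometry.
Variables (R : realType) (n : nat) (mu : 'rV[R]_n).

Definition mu_dot (x y : 'rV[R]_n) : R := \sum_i mu 0 i * (x 0 i * y 0 i).

Lemma Amat_dot gamma (P : 'M[R]_n) (x y : 'rV[R]_n) :
  (x *m Amat mu gamma P *m y^T) 0 0 = mu_dot x y - gamma * mu_dot x (y *m P^T).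
Proof.
rewrite /Amat /Dmu mulmxA mul_mx_diag mulmxBr mulmx1 -scalemxAr mulmxBl.
rewrite -scalemxAl -mulmxA !mxE /mu_dot.
congr (_ - gamma * _); apply: eq_bigr => i _; rewrite !mxE.
  ring.
by rewrite !mulr_sumr; apply: eq_bigr => k _; rewrite !mxE; ring.
Qed.

Hypothesis mu_ge0 : forall i, 0 <= mu 0 i.

Lemma mu_dotxx_ge0 x : 0 <= mu_dot x x.
Proof. by apply: sumr_ge0 => i _; rewrite mulr_ge0 // -expr2 sqr_ge0. Qed.

Lemma mu_norm_sqr x : mu_norm mu x ^+ 2 = mu_dot x x.
Proof.
rewrite /mu_norm.
have -> : (x *m Dmu mu *m x^T) 0 0 = mu_dot x x.
  by rewrite /Dmu mul_mx_diag !mxE; apply: eq_bigr => i _; rewrite !mxE; ring.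
by rewrite sqr_sqrtr // mu_dotxx_ge0.
Qed.

Lemma mu_dot_young (eps : R) x y : 0 < eps ->
  `|2 * mu_dot x y| <= eps * mu_dot y y + mu_dot x x / eps.
Proof.
move=> eps_gt0; rewrite /mu_dot !mulr_sumr mulr_suml -big_split /=.
apply: (le_trans (ler_norm_sum _ _ _)); apply: ler_sum => i _.
rewrite mulrCA normrM ger0_norm //.
have -> : eps * (mu 0 i * (y 0 i * y 0 i)) + mu 0 i * (x 0 i * x 0 i) / eps =
    mu 0 i * (eps * y 0 i ^+ 2 + x 0 i ^+ 2 / eps) by ring.
apply: ler_wpM2l => //.
(* [eps y^2 + x^2/eps -+ 2xy = (eps y -+ x)^2 / eps] *)
have sqr_div_ge0 (z : R) : 0 <= z ^+ 2 / eps by rewrite divr_ge0 ?sqr_ge0 ?ltW.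
have := sqr_div_ge0 (eps * y 0 i - x 0 i); have := sqr_div_ge0 (eps * y 0 i + x 0 i).
have -> : (eps * y 0 i + x 0 i) ^+ 2 / eps =
    eps * y 0 i ^+ 2 + x 0 i ^+ 2 / eps + 2 * (x 0 i * y 0 i) by field; rewrite gt_eqF.
have -> : (eps * y 0 i - x 0 i) ^+ 2 / eps =
    eps * y 0 i ^+ 2 + x 0 i ^+ 2 / eps - 2 * (x 0 i * y 0 i) by field; rewrite gt_eqF.
by rewrite ler_norml; lra.
Qed.

End mu_geometry.

Lemma jensen_sqr (R : realFieldType) (I : finType) (p x : I -> R) :
  (forall j, 0 <= p j) -> \sum_j p j = 1 ->
  (\sum_j p j * x j) ^+ 2 <= \sum_j p j * x j ^+ 2.
Proof.
move=> p_ge0 p_sum1; move mE : (\sum_j p j * x j) => m.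
have : 0 <= \sum_j p j * (x j - m) ^+ 2.
  by apply: sumr_ge0 => j _; rewrite mulr_ge0 // sqr_ge0.
have -> : \sum_j p j * (x j - m) ^+ 2 =
    \sum_j p j * x j ^+ 2 - 2 * m * (\sum_j p j * x j) + m ^+ 2 * \sum_j p j.
  rewrite !mulr_sumr -sumrB -big_split /=; apply: eq_bigr => j _; ring.
by rewrite p_sum1 mE; lra.
Qed.

Section stationary_contraction.
Variables (R : realType) (n : nat) (mu : 'rV[R]_n) (P : 'M[R]_n) (gamma : R).
Hypotheses (mu_ge0 : forall i, 0 <= mu 0 i) (P_stochastic : stochastic P).
Hypotheses (mu_stationary : mu *m P = mu) (gamma_ge0 : 0 <= gamma).

Lemma mu_dot_stochastic y : mu_dot mu (y *m P^T) (y *m P^T) <= mu_dot mu y y.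
Proof.
have [P_ge0 P_sum1] := P_stochastic.
apply: (@le_trans _ _ (\sum_i mu 0 i * \sum_j P i j * y 0 j ^+ 2)).
  apply: ler_sum => i _; rewrite -expr2 ler_wpM2l // mxE.
  under eq_bigr do rewrite mxE mulrC.
  exact: jensen_sqr.
under eq_bigr do rewrite mulr_sumr.
rewrite exchange_big /=; apply: ler_sum => j _; under eq_bigr do rewrite mulrA.
by rewrite -mulr_suml -{2}mu_stationary !mxE expr2.
Qed.

Lemma Amat_coercive e : (1 - gamma) * mu_dot mu e e <= (e *m Amat mu gamma P *m e^T) 0 0.
Proof.
rewrite Amat_dot.
have := mu_dot_young mu_ge0 e (e *m P^T) ltr01.
rewrite ler_norml mul1r divr1 => /andP[_ young].
have contr := mu_dot_stochastic e.
have cross_le : mu_dot mu e (e *m P^T) <= mu_dot mu e e by lra.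
have := ler_wpM2l gamma_ge0 cross_le; lra.
Qed.

Lemma Amat_cross_ge (eps : R) d e : 0 < eps ->
  - ((1 + gamma) / 2) * (eps * mu_dot mu e e + mu_dot mu d d / eps)
  <= (d *m Amat mu gamma P *m e^T) 0 0.
Proof.
move=> eps_gt0; rewrite Amat_dot.
have := mu_dot_young mu_ge0 d e eps_gt0; rewrite ler_norml => /andP[young _].
have := mu_dot_young mu_ge0 d (e *m P^T) eps_gt0; rewrite ler_norml => /andP[_ youngP].
have contr := ler_wpM2l (ltW eps_gt0) (mu_dot_stochastic e).
have crossP_le : 2 * mu_dot mu d (e *m P^T) <= eps * mu_dot mu e e + mu_dot mu d d / eps.
  by lra.
have := ler_wpM2l gamma_ge0 crossP_le; lra.
Qed.

Lemma Amat_dissipation d e : gamma < 1 ->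
  (1 - gamma) * (mu_dot mu e e - ((1 + gamma) / (1 - gamma)) ^+ 2 * mu_dot mu d d)
  <= 2 * (((e + d) *m Amat mu gamma P *m e^T) 0 0).
Proof.
rewrite -subr_gt0 => one_sub_gamma_gt0.
have one_add_gamma_gt0 : 0 < 1 + gamma := ltr_wpDr gamma_ge0 ltr01.
(* This Young weight makes the cross term cost half of the coercivity margin. *)
have eps_gt0 := divr_gt0 one_sub_gamma_gt0 one_add_gamma_gt0.
rewrite !mulmxDl mxE.
have := Amat_cross_ge d e eps_gt0; have := Amat_coercive e.
have -> : - ((1 + gamma) / 2) * ((1 - gamma) / (1 + gamma) * mu_dot mu e e +
    mu_dot mu d d / ((1 - gamma) / (1 + gamma))) =
  - ((1 - gamma) / 2 * (mu_dot mu e e + ((1 + gamma) / (1 - gamma)) ^+ 2 * mu_dot mu d d)).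
  by field; rewrite !lt0r_neq0.
lra.
Qed.

End stationary_contraction.

Section calculus.
Variable R : realType.

Lemma continuous_mulmxr m a b (M : 'M[R]_(a, b)) :
  continuous (fun x : 'M[R]_(m, a) => x *m M).
Proof.
move=> u A /nbhs_ballP[e /= e_gt0 eA].
set K := 1 + \sum_(k < a) \sum_(j < b) `|M k j|.
have K_gt0 : 0 < K by rewrite ltr_pwDl // sumr_ge0 // => k _; rewrite sumr_ge0.
apply/nbhs_ballP; exists (e / K) => /=; first by rewrite divr_gt0.
move=> v [_ uv]; apply: eA; split => // i j.
rewrite /ball /= !mxE -sumrB.
apply: (le_lt_trans (ler_norm_sum _ _ _)).
apply: (@le_lt_trans _ _ (\sum_(k < a) e / K * `|M k j|)).
  apply: ler_sum => k _; rewrite -mulrBl normrM ler_wpM2r //.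
  by have := uv i k; rewrite /ball /= => /ltW.
rewrite -mulr_sumr mulrAC ltr_pdivrMr // ltr_pM2l //.
have : \sum_(k < a) `|M k j| <= \sum_(k < a) \sum_(j0 < b) `|M k j0|.
  by apply: ler_sum => k _; rewrite (bigD1 j) //= lerDl sumr_ge0.
rewrite /K; lra.
Qed.

Lemma differentiable_mulmxr m a b (M : 'M[R]_(a, b)) (x : 'M[R]_(m, a)) :
  differentiable (mulmxr M) x.
Proof. exact/linear_differentiable/continuous_mulmxr. Qed.

Lemma diff_mulmxr m a b (M : 'M[R]_(a, b)) (x : 'M[R]_(m, a)) :
  'd (mulmxr M) x = mulmxr M :> (_ -> _).
Proof. exact/diff_lin/continuous_mulmxr. Qed.

Lemma is_derive_entry m k (f : R -> 'M[R]_(m, k)) (t : R) (df : 'M[R]_(m, k)) i j :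
  is_derive t 1 f df -> is_derive t 1 (fun s => f s i j) (df i j).
Proof.
move=> f_df; have f_derivable : derivable f t 1 by exact: ex_derive.
apply: DeriveDef; first exact: (derivable_mxP f t 1).1.
by have := derive_mx f_derivable; rewrite derive_val => ->; rewrite mxE.
Qed.

Definition weighted_sqdist k (c W x : 'rV[R]_k) : R :=
  ((x - W) *m diag_mx c *m (x - W)^T) 0 0.

Lemma weighted_sqdistE k (c W x : 'rV[R]_k) :
  weighted_sqdist c W x = \sum_i c 0 i * (x 0 i - W 0 i) ^+ 2.
Proof.
rewrite /weighted_sqdist mul_mx_diag !mxE.
by apply: eq_bigr => i _; rewrite !mxE; ring.
Qed.

Lemma weighted_sqdist_ge0 k (c W x : 'rV[R]_k) :
  (forall i, 0 <= c 0 i) -> 0 <= weighted_sqdist c W x.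
Proof.
by move=> c_ge0; rewrite weighted_sqdistE sumr_ge0 // => i _; rewrite mulr_ge0 ?sqr_ge0.
Qed.

Lemma weighted_sqdist_eq0 k (c W x : 'rV[R]_k) :
  (forall i, 0 < c 0 i) -> weighted_sqdist c W x = 0 -> x = W.
Proof.
move=> c_gt0; rewrite weighted_sqdistE => /psumr_eq0P sum_eq0.
apply/rowP => i; apply/eqP; rewrite -subr_eq0 -sqrf_eq0.
have /eqP := sum_eq0 (fun j _ => mulr_ge0 (ltW (c_gt0 j)) (sqr_ge0 _)) i isT.
by rewrite mulf_eq0 gt_eqF.
Qed.

Lemma is_derive_weighted_sqdist k (c W : 'rV[R]_k) (f : R -> 'rV[R]_k) (t : R) (df : 'rV[R]_k) :
  is_derive t 1 f df ->
  is_derive t 1 (weighted_sqdist c W \o f)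
    (2 * ((f t - W) *m diag_mx c *m df^T) 0 0).
Proof.
move=> f_df.
have := is_derive_sum (fun i => is_deriveZ (c 0 i) (is_deriveX 2
  (is_deriveB (is_derive_entry 0 i f_df) (is_derive_cst (W 0 i) t 1)))).
have -> : \sum_i (c 0 i \*: ((fun s => f s 0 i) - cst (W 0 i)) ^+ 2) =
    weighted_sqdist c W \o f.
  by apply/funext => s; rewrite /= weighted_sqdistE fct_sumE.
congr is_derive; rewrite mul_mx_diag !mxE mulr_sumr.
by apply: eq_bigr => i _; rewrite !mxE !fctE /GRing.scale /=; ring.
Qed.

Lemma MVT_le (f df : R -> R) (a b M : R) : a < b ->
  (forall x, x \in `[a, b] -> is_derive x 1 f (df x)) ->
  (forall x, x \in `]a, b[ -> df x <= M) ->
  f b - f a <= M * (b - a).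
Proof.
move=> a_lt_b f_df df_le.
have f_cont : {within `[a, b], continuous f}.
  by apply: derivable_within_continuous => x /f_df f_dfx; exact: ex_derive.
have oo_cc x : x \in `]a, b[ -> x \in `[a, b].
  by rewrite !in_itv /= => /andP[ax xb]; rewrite !ltW.
have [c c_ab ->] := MVT a_lt_b (fun x x_ab => f_df x (oo_cc x x_ab)) f_cont.
by apply: ler_wpM2r; [rewrite subr_ge0 ltW | exact: df_le].
Qed.

Lemma derive_le_neg_lt0 (f df : R -> R) (T eta : R) : 0 < eta ->
  (forall t, T <= t -> is_derive t 1 f (df t)) ->
  (forall t, T <= t -> df t <= - eta) ->
  exists t, f t < 0.
Proof.
move=> eta_gt0 f_df df_le.
have [fT_lt0|fT_ge0] := ltP (f T) 0; first by exists T.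
(* f decreases at rate at least [eta], so it is negative after time [f T / eta + 1] *)
set b := T + f T / eta + 1.
have T_lt_b : T < b by have := divr_ge0 fT_ge0 (ltW eta_gt0); rewrite /b; lra.
have decrease : f b - f T <= - eta * (b - T).
  apply: MVT_le => // x; rewrite in_itv /= => /andP[Tx _].
    exact: f_df.
  exact/df_le/ltW.
have : - eta * (b - T) = - (f T + eta) by rewrite /b; field; rewrite gt_eqF.
by exists b; lra.
Qed.

End calculus.

Section homogeneous_functions.
Variables (R : realType) (k m : nat) (g : 'rV[R]_k -> 'rV[R]_m).
Hypothesis g_diff : forall x, differentiable g x.

Lemma is_derive_ray (x : 'rV[R]_k) (s : R) :
  is_derive s 1 (fun r => g (r *: x)) (x *m 'J g (s *: x)).
Proof.
have scale_diff := @is_diff_scalel R _ s x.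
have ray_diff : differentiable (fun r : R => r *: x) s by exact: ex_diff.
have gx_diff : differentiable (g \o (fun r : R => r *: x)) s.
  exact: differentiable_comp ray_diff (g_diff _).
apply: DeriveDef; first exact/derivable1_diffP.
by rewrite deriveE // diff_comp // diff_val /= scale1r /jacobian mul_rV_lin1.
Qed.

Lemma homogeneous_neg_eq0 (h : R) : h < 0 -> homogeneous h g -> forall x, g x = 0.
Proof.
move=> h_lt0 g_hom x.
pose one : 'rV[R]_m := const_mx 1.
have one_gt0 i : 0 < one 0 i by rewrite mxE.
pose psi := weighted_sqdist one 0 \o (fun r => g (r *: x)).
have psi_derive r := is_derive_weighted_sqdist one 0 (is_derive_ray x r).
(* along the ray, [g (r x) = h r (x J)], so [psi' r = 2 h r |x J|^2 <= 0] *)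
have psi_derive_le0 r : 0 < r ->
    2 * ((g (r *: x) - 0) *m diag_mx one *m (x *m 'J g (r *: x))^T) 0 0 <= 0.
  move=> r_gt0; rewrite {1}g_hom -scalemxAl subr0 scalerA -!scalemxAl mxE.
  have := weighted_sqdist_ge0 0 (x *m 'J g (r *: x)) (fun i => ltW (one_gt0 i)).
  rewrite /weighted_sqdist subr0; set q := (_ *m _ *m _) 0 0 => q_ge0.
  by rewrite mulrCA nmulr_rle0 ?mulr_ge0 // pmulr_llt0.
have : psi 1 - psi 0 <= 0 * (1 - 0).
  apply: MVT_le ltr01 (fun r _ => psi_derive r) _ => r.
  by rewrite in_itv /= => /andP[r_gt0 _]; exact: psi_derive_le0.
have -> : psi 0 = 0.
  rewrite /psi /= scale0r g_hom mul0mx scaler0 weighted_sqdistE.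
  by apply: big1 => i _; rewrite !mxE subrr expr0n mulr0.
rewrite mul0r subr0 /psi /= scale1r => psi1_le0.
apply/(weighted_sqdist_eq0 one_gt0)/le_anti.
by rewrite psi1_le0 weighted_sqdist_ge0 // => i; exact/ltW.
Qed.

Lemma homogeneous_nonneg_degree (h : R) :
  homogeneous h g -> exists2 h', 0 <= h' & homogeneous h' g.
Proof.
move=> g_hom; have [h_ge0|h_lt0] := leP 0 h; first by exists h.
exists 0 => // x; rewrite scale0r; exact: homogeneous_neg_eq0 h_lt0 g_hom x.
Qed.

End homogeneous_functions.

Section residual_parametrization.
Variables (R : realType) (n d1 d2 : nat) (Phi : 'M[R]_(n, d1)).
Variables (g : 'rV[R]_d2 -> 'rV[R]_n).
Hypothesis g_diff : forall x, differentiable g x.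

Let lsub : 'rV[R]_(d1 + d2) -> 'rV[R]_d1 := lsubmx.
Let rsub : 'rV[R]_(d1 + d2) -> 'rV[R]_d2 := rsubmx.
Let Phi_map : 'rV[R]_d1 -> 'rV[R]_n := mulmxr Phi^T.

Lemma resV_comp : resV Phi g = (Phi_map \o lsub) + (g \o rsub).
Proof. by []. Qed.

Lemma differentiable_resV th : differentiable (resV Phi g) th.
Proof.
rewrite resV_comp; apply: differentiableD; apply: differentiable_comp => //.
- exact: differentiable_lsubmx.
- exact: differentiable_mulmxr.
- exact: differentiable_rsubmx.
Qed.

Lemma resV_jacobian (th u : 'rV[R]_(d1 + d2)) :
  u *m 'J (resV Phi g) th = lsubmx u *m Phi^T + rsubmx u *m 'J g (rsubmx th).
Proof.
have l_diff : differentiable (Phi_map \o lsub) th.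
  by apply: differentiable_comp; [exact: differentiable_lsubmx | exact: differentiable_mulmxr].
have r_diff : differentiable (g \o rsub) th.
  by apply: differentiable_comp; [exact: differentiable_rsubmx | exact: g_diff].
have V_diff := differentiable_resV th.
have lin_part : 'd (Phi_map \o lsub) th u = lsubmx u *m Phi^T.
  rewrite diff_comp; [|exact: differentiable_lsubmx|exact: differentiable_mulmxr].
  by rewrite diff_mulmxr (diff_lin _ (@continuous_lsubmx _ _ _ _)).
have nonlin_part : 'd (g \o rsub) th u = rsubmx u *m 'J g (rsubmx th).
  rewrite diff_comp; [|exact: differentiable_rsubmx|exact: g_diff].
  by rewrite (diff_lin _ (@continuous_rsubmx _ _ _ _)) /jacobian mul_rV_lin1.
rewrite -deriveEjacobian // deriveE // resV_comp (diffD l_diff r_diff).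
by rewrite -lin_part -nonlin_part.
Qed.

End residual_parametrization.

Lemma limf_einf_gt (R : realType) (f : R -> R) (a : R) :
  (a%:E < limf_einf (fun t => (f t)%:E) (pinfty_nbhs R))%E ->
  exists2 b, a < b & exists M, forall t, M < t -> b <= f t.
Proof.
rewrite limf_einfE => /ereal_sup_gt[_ [V [M [_ V_M]] <-]].
have inf_le t : V t -> (ereal_inf ((fun t => (f t)%:E) @` V) <= (f t)%:E)%E.
  by move=> Vt; apply: ereal_inf_lbound; exists t.
case: (ereal_inf _) inf_le => [b | | //] inf_le a_lt.
- by exists b; [rewrite -lte_fin | exists M => t /V_M /inf_le; rewrite lee_fin].
- exists (a + 1); first lra.
  by exists M => t /V_M /inf_le; rewrite leye_eq.
Qed.

Section lyapunov.
Variables (R : realType) (n d1 d2 : nat) (P : 'M[R]_n) (mu : 'rV[R]_n).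
Variables (gamma : R) (Vstar : 'rV[R]_n) (Phi : 'M[R]_(n, d1)).
Variables (g : 'rV[R]_d2 -> 'rV[R]_n) (h : R) (w : 'rV[R]_d1).
Variable theta : R -> 'rV[R]_(d1 + d2).
Hypotheses (mu_ge0 : forall i, 0 <= mu 0 i) (P_stochastic : stochastic P).
Hypotheses (mu_stationary : mu *m P = mu) (gamma_ge0 : 0 <= gamma) (gamma_lt1 : gamma < 1).
Hypotheses (g_diff : forall x, differentiable g x) (h_ge0 : 0 <= h) (g_hom : homogeneous h g).

Let V := resV Phi g.
Let A := Amat mu gamma P.
Let K := (1 + gamma) / (1 - gamma).
Let flow th := - (((V th - Vstar) *m A^T) *m ('J V th)^T).

Hypothesis theta_flow : forall t : R, 0 < t -> is_derive t 1 theta (flow (theta t)).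

Let lyap_weights : 'rV[R]_(d1 + d2) := row_mx (const_mx 1) (const_mx h).
Let lyap_center : 'rV[R]_(d1 + d2) := row_mx w 0.
Let lyap := weighted_sqdist lyap_weights lyap_center.

Lemma lyap_gradient_jacobian th :
  (th - lyap_center) *m diag_mx lyap_weights *m 'J V th = V th - w *m Phi^T.
Proof.
rewrite -{1}(hsubmxK th) opp_row_mx add_row_mx subr0 diag_mx_row !diag_const_mx.
rewrite mul_row_block !mulmx0 addr0 add0r mulmx1 mul_mx_scalar resV_jacobian //.
by rewrite row_mxKl row_mxKr -scalemxAl -g_hom /V /resV mulmxBl addrAC.
Qed.

Lemma lyap_derive_le th :
  2 * ((th - lyap_center) *m diag_mx lyap_weights *m (flow th)^T) 0 0 <=
  - ((1 - gamma) * (mu_dot mu (V th - Vstar) (V th - Vstar)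
       - K ^+ 2 * mu_dot mu (Vstar - w *m Phi^T) (Vstar - w *m Phi^T))).
Proof.
have -> : (flow th)^T = - ('J V th *m A *m (V th - Vstar)^T).
  by rewrite /flow linearN /= !trmx_mul !trmxK mulmxA.
rewrite mulmxN mulmxA mulmxA lyap_gradient_jacobian mxE mulrN lerN2.
have -> : V th - w *m Phi^T = (V th - Vstar) + (Vstar - w *m Phi^T).
  by rewrite addrA subrK.
exact: Amat_dissipation.
Qed.

Theorem limf_einf_value_error_le :
  (limf_einf (fun t => (mu_norm mu (V (theta t) - Vstar))%:E) (pinfty_nbhs R)
   <= (K * mu_norm mu (Vstar - w *m Phi^T))%:E)%E.
Proof.
set s := mu_norm mu _; rewrite leNgt; apply/negP => /limf_einf_gt[c Ks_lt_c [M c_le]].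
have s_ge0 : 0 <= s by exact: sqrtr_ge0.
have K_ge0 : 0 <= K by apply: divr_ge0; [exact: addr_ge0 | rewrite subr_ge0 ltW].
have Ks_ge0 : 0 <= K * s := mulr_ge0 K_ge0 s_ge0.
pose eta := (1 - gamma) * (c ^+ 2 - (K * s) ^+ 2).
have c_ge0 : 0 <= c := le_trans Ks_ge0 (ltW Ks_lt_c).
have eta_gt0 : 0 < eta.
  by apply: mulr_gt0; rewrite subr_gt0 // ltr_pXn2r ?nnegrE.
have T_gt0 : 0 < `|M| + 1 by rewrite ltr_pwDr.
pose dlyap t := 2 * ((theta t - lyap_center) *m diag_mx lyap_weights *m (flow (theta t))^T) 0 0.
have lyap_derive t : `|M| + 1 <= t -> is_derive t 1 (lyap \o theta) (dlyap t).
  by move=> T_le_t; apply/is_derive_weighted_sqdist/theta_flow/(lt_le_trans T_gt0).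
have dlyap_le t : `|M| + 1 <= t -> dlyap t <= - eta.
  move=> T_le_t; apply: le_trans (lyap_derive_le _) _.
  have M_lt_t : M < t by have := ler_norm M; lra.
  have := c_le t M_lt_t; rewrite -(ler_pXn2r (n := 2)) ?nnegrE ?sqrtr_ge0 //.
  rewrite mu_norm_sqr // -(mu_norm_sqr mu_ge0 (Vstar - _)) -/s => c2_le.
  rewrite /eta lerN2; apply: ler_wpM2l; first by rewrite subr_ge0 ltW.
  by rewrite exprMn lerD2r.
have weights_ge0 i : 0 <= lyap_weights 0 i.
  by rewrite !mxE; case: split_ordP => ? _; rewrite mxE.
have [t] := derive_le_neg_lt0 eta_gt0 lyap_derive dlyap_le.
by apply/negP; rewrite -leNgt weighted_sqdist_ge0.
Qed.

End lyapunov.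

Theorem corollary1 (R : realType) (n d1 d2 : nat)
  (P : 'M[R]_n) (mu : 'rV[R]_n) (r : 'I_n -> 'I_n -> R) (gamma : R)
  (Vstar : 'rV[R]_n)
  (Phi : 'M[R]_(n, d1)) (g : 'rV[R]_d2 -> 'rV[R]_n) (h C l : R)
  (theta : R -> 'rV[R]_(d1 + d2)) (PiVstar : 'rV[R]_n) :
  stochastic P -> irreducible P -> aperiodic P -> stationary_dist P mu ->
  0 <= gamma -> gamma < 1 ->
  (forall s, Vstar 0 s = exp_reward P r s + gamma * \sum_s' P s s' * Vstar 0 s') ->
  \rank Phi = minn n d1 ->
  (forall x, differentiable g x) -> continuous (fun x => 'J g x) ->
  homogeneous h g ->
  0 < C -> 0 < l ->
  (forall th, mu_norm mu (resV Phi g th) <= C * powR (eucl_norm th) l) ->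
  is_mu_proj mu Phi Vstar PiVstar ->
  (forall t : R, 0 < t ->
     is_derive t 1 theta
       (- (((resV Phi g (theta t) - Vstar) *m (Amat mu gamma P)^T)
             *m ('J (resV Phi g) (theta t))^T))) ->
  (limf_einf (fun t : R => (mu_norm mu (resV Phi g (theta t) - Vstar))%:E)
             (pinfty_nbhs R)
   <= ((1 + (1 + gamma) / (1 - gamma)) * mu_norm mu (Vstar - PiVstar))%:E)%E.
Proof.
move=> P_stochastic _ _ [mu_ge0 [_ mu_stationary]] gamma_ge0 gamma_lt1 _ _ g_diff _ g_hom
  _ _ _ [[w ->] _] theta_flow.
have [h' h'_ge0 g_hom'] := homogeneous_nonneg_degree g_diff g_hom.
apply: le_trans (limf_einf_value_error_le w mu_ge0 P_stochastic mu_stationary gamma_ge0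
  gamma_lt1 g_diff h'_ge0 g_hom' theta_flow) _.
by rewrite lee_fin ler_wpM2r ?sqrtr_ge0 // lerDr.
Qed.
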